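(* For all integers $n,m\ge0$, $$\sum_{k=0}^n\binom{n}{k}(-1)^kH_k(m)=(-1)^n\frac{m!}{n!}s(n,m)\qquad\text{and}\qquad \sum_{k=m}^n\binom{n}{k}\frac{s(k,m)}{k!}=\frac{1}{m!}H_n(m).$$
   Context: For integers $m\ge 1$, $n\ge 0$, the multiple harmonic-like numbers are $H_n(m)=\sum_{1\le k_1+k_2+\cdots+k_m\le n}\frac{1}{k_1k_2\cdots k_m}$ (sum over positive integers $k_1,\dots,k_m$), with $H_n(0)=1$ for $n\ge 0$ and $H_0(m)=0$ for $m\ge1$. Equivalently, $\sum_{n\ge0}H_n(m)z^n=\frac{(-\ln(1-z))^m}{1-z}$. The (signed) Stirling numbers of the first kind $s(n,k)$ are defined by $\sum_{n\ge k}s(n,k)\frac{z^n}{n!}=\frac{\ln^k(1+z)}{k!}$, with $s(n,k)=0$ for $n<k$. *)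

From mathcomp Require Import all_boot all_order all_algebra.
Set Implicit Arguments. Unset Strict Implicit. Unset Printing Implicit Defensive.
Import Order.TTheory GRing.Theory Num.Theory.
Local Open Scope ring_scope.

(* Tuples (k_1,...,k_m) of positive integers, each k_i <= n (automatic when
   the sum is <= n), encoded as finite functions 'I_m -> 'I_n.+1. *)
Definition pos_tuple (m n : nat) (k : {ffun 'I_m -> 'I_n.+1}) : bool :=
  [forall i, 0 < (k i : nat)]%N.

Definition tsum (m n : nat) (k : {ffun 'I_m -> 'I_n.+1}) : nat :=
  (\sum_(i < m) (k i : nat))%N.

Definition Hmult (n m : nat) : rat :=
  if m is 0 then 1 else
  \sum_(k : {ffun 'I_m -> 'I_n.+1} | pos_tuple k && (1 <= tsum k <= n)%N)
     \prod_(i < m) ((k i : nat)%:R)^-1.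

(* Signed Stirling numbers of the first kind, via the generating function
   sum_n s(n,k) z^n/n! = ln^k(1+z)/k!, ln(1+z) = sum_{j>=1} (-1)^(j-1) z^j/j:
   s(n,k) = n!/k! * [z^n] ln(1+z)^k, the coefficient written as the sum over
   compositions (j_1,...,j_k) of n into k positive parts. *)
Definition stirling1 (n k : nat) : rat :=
  (n`!)%:R / (k`!)%:R *
  \sum_(j : {ffun 'I_k -> 'I_n.+1} | pos_tuple j && (tsum j == n))
     \prod_(i < k) ((-1) ^+ (j i : nat).-1 / (j i : nat)%:R).

(* Let c(m, N) be the coefficient of z^N in (-ln(1-z))^m.  Expanding the
   m-th power as a sum over compositions gives H_n(m) = sum_(N <= n) c(m, N)
   and s(n, m) = (-1)^(n+m) n!/m! c(m, n), so both identities say that the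
   binomial transform T a_n = sum_k C(n, k) (-1)^k a_k sends the partial sums
   of c(m, _) to (-1)^m c(m, _), and c(m, _) to (-1)^m times its partial sums.
   This goes by induction on m: T turns division by k+1 into division by n+1
   of partial sums of the transform, which matches the derivative identity
   ((-ln(1-z))^(m+1))' = (m+1) (-ln(1-z))^m / (1-z). *)

From mathcomp Require Import all_boot all_order all_algebra ring.
Set Implicit Arguments. Unset Strict Implicit. Unset Printing Implicit Defensive.
Import Order.TTheory GRing.Theory Num.Theory.
Local Open Scope ring_scope.

Lemma pos_tuple_tsum_ge m n (k : {ffun 'I_m -> 'I_n.+1}) :
  pos_tuple k -> (m <= tsum k)%N.
Proof.
move=> /forallP k_gt0; rewrite /tsum -[m in (m <= _)%N]card_ord -sum1_card.
exact: leq_sum (fun i _ => k_gt0 i).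
Qed.

Lemma coef_expr_eq (R : nzRingType) (p q : {poly R}) N m :
  (forall i, (i <= N)%N -> p`_i = q`_i) ->
  forall i, (i <= N)%N -> (p ^+ m)`_i = (q ^+ m)`_i.
Proof.
move=> pq; elim: m => [|m IHm] i leiN; first by rewrite !expr0.
rewrite !exprS !coefM; apply: eq_bigr => j _.
have lejN : (j <= N)%N by apply: leq_trans leiN; rewrite -ltnS.
by rewrite pq // IHm // (leq_trans (leq_subr _ _) leiN).
Qed.

Section GeneratingPolynomial.
Variable R : comNzRingType.

Definition genpoly (w : nat -> R) (B : nat) : {poly R} :=
  \sum_(j < B.+1 | (0 < j)%N) w j *: 'X^j.

Lemma coef_genpoly w B i : (genpoly w B)`_i = if (0 < i <= B)%N then w i else 0.
Proof. by rewrite coef_sumMXn big_ord1_cond_eq ltnS andbC. Qed.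

Lemma genpoly_expr w B m : genpoly w B ^+ m =
  \sum_(k : {ffun 'I_m -> 'I_B.+1} | pos_tuple k) (\prod_i w (k i)) *: 'X^(tsum k).
Proof.
rewrite -[m in LHS]card_ord -prodr_const bigA_distr_big.
apply: eq_big => [k | k _]; first exact/ffun_onP/forallP.
under eq_bigr do rewrite -mul_polyC.
by rewrite big_split /= -rmorph_prod prodrXr mul_polyC.
Qed.

Lemma coef_genpoly_expr w B m N : (genpoly w B ^+ m)`_N =
  \sum_(k : {ffun 'I_m -> 'I_B.+1} | pos_tuple k && (tsum k == N)) \prod_i w (k i).
Proof. by rewrite genpoly_expr coef_sumMXn. Qed.

Lemma coef_genpoly_expr_small w B m N : (N < m)%N -> (genpoly w B ^+ m)`_N = 0.
Proof.
move=> ltNm; rewrite coef_genpoly_expr big_pred0 // => k.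
by apply/andP => -[/pos_tuple_tsum_ge + /eqP tsumN]; rewrite tsumN leqNgt ltNm.
Qed.

Lemma coef_genpoly_expr_trunc w B m N : (N <= B)%N ->
  (genpoly w B ^+ m)`_N = (genpoly w N ^+ m)`_N.
Proof.
move=> leNB; apply: (coef_expr_eq (N := N)) => // i leiN.
by rewrite !coef_genpoly leiN (leq_trans leiN leNB) !andbT.
Qed.

End GeneratingPolynomial.

Section BinomialTransform.
Variable R : comNzRingType.
Implicit Types (a b : nat -> R) (n : nat).

Definition psum a n : R := \sum_(k < n.+1) a k.

Lemma psum0 a : psum a 0 = a 0%N.
Proof. exact: big_ord1. Qed.

Lemma psumS a n : psum a n.+1 = psum a n + a n.+1.
Proof. exact: big_ord_recr. Qed.

Definition bintr a n : R := \sum_(k < n.+1) 'C(n, k)%:R * (-1) ^+ k * a k.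

Lemma eq_bintr a b : a =1 b -> bintr a =1 bintr b.
Proof. by move=> eq_ab n; apply: eq_bigr => k _; rewrite eq_ab. Qed.

Lemma bintr0 a : bintr a 0 = a 0%N.
Proof. by rewrite /bintr big_ord1 bin0 expr0 !mul1r. Qed.

Lemma bintrD a b n : bintr (fun k => a k + b k) n = bintr a n + bintr b n.
Proof. by rewrite /bintr -big_split; apply: eq_bigr => k _; rewrite mulrDr. Qed.

Lemma bintrZ c a n : bintr (fun k => c * a k) n = c * bintr a n.
Proof. by rewrite /bintr mulr_sumr; apply: eq_bigr => k _; rewrite mulrCA. Qed.

Lemma bintrS a n : bintr a n.+1 = bintr a n - bintr (fun k => a k.+1) n.
Proof.
have -> : bintr a n = \sum_(k < n.+2) 'C(n, k)%:R * (-1) ^+ k * a k.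
  by rewrite [RHS]big_ord_recr /= bin_small // !mul0r addr0.
rewrite /bintr big_ord_recl [X in X - _]big_ord_recl !bin0 -addrA -sumrB; congr (_ + _).
by apply: eq_bigr => k _; rewrite lift0 binS natrD exprS; ring.
Qed.

Lemma bintr_psumS a n : bintr (psum a) n.+1 = - bintr (fun k => a k.+1) n.
Proof. by rewrite bintrS (eq_bintr (psumS a)) bintrD opprD addNKr. Qed.

Lemma bintr_psum_bintr e a :
  (forall n, bintr (psum a) n = e * a n) -> forall n, bintr a n = e * psum a n.
Proof.
move=> bintr_psum_a; elim=> [|n IHn].
  by rewrite bintr0 psum0 -bintr_psum_a bintr0 psum0.
by rewrite bintrS IHn -bintr_psumS bintr_psum_a psumS mulrDr.
Qed.

Lemma psum_bintr a n :
  psum (bintr a) n = \sum_(k < n.+1) 'C(n.+1, k.+1)%:R * (-1) ^+ k * a k.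
Proof.
elim: n => [|n IHn]; first by rewrite psum0 big_ord1 bintr0 /= expr0 !mul1r.
rewrite psumS IHn /bintr.
rewrite [RHS](eq_bigr (fun k : 'I_n.+2 => 'C(n.+1, k.+1)%:R * (-1) ^+ k * a k
    + 'C(n.+1, k)%:R * (-1) ^+ k * a k)); last by move=> k _; rewrite binS natrD !mulrDl.
by rewrite big_split /= [in RHS]big_ord_recr /= bin_small // !mul0r addr0.
Qed.
End BinomialTransform.

Lemma bintr_divS (R : numFieldType) (a : nat -> R) n :
  bintr (fun k => a k / k.+1%:R) n = psum (bintr a) n / n.+1%:R.
Proof.
rewrite psum_bintr /bintr mulr_suml; apply: eq_bigr => k _.
have binSS : 'C(n.+1, k.+1)%:R = n.+1%:R / k.+1%:R * 'C(n, k)%:R :> R.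
  rewrite mulrAC -natrM (mul_bin_diag n.+1 k) natrM mulrC mulKf //.
  by rewrite pnatr_eq0.
by rewrite binSS; field; rewrite !nat1r !pnatr_eq0.
Qed.

(* The coefficient of [z^N] in [(-ln(1-z))^m], read off a truncation of
   [-ln(1-z) = \sum_(j >= 1) z^j / j]. *)
Definition ln_coef (m N : nat) : rat :=
  (genpoly (fun j => (j%:R)^-1) N ^+ m)`_N.

Lemma ln_coefE B m N : (N <= B)%N ->
  (genpoly (fun j => (j%:R)^-1) B ^+ m)`_N = ln_coef m N.
Proof. exact: coef_genpoly_expr_trunc. Qed.

Lemma ln_coef_small m N : (N < m)%N -> ln_coef m N = 0.
Proof. exact: coef_genpoly_expr_small. Qed.

Lemma ln_coef0 m : ln_coef m 0 = (m == 0)%:R.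
Proof. by case: m => [|m]; [rewrite /ln_coef expr0 coef1 | rewrite ln_coef_small]. Qed.

Lemma ln_coef0n N : ln_coef 0 N = (N == 0)%:R.
Proof. by rewrite /ln_coef expr0 coef1. Qed.

(* Coefficient form of [((-ln(1-z))^(m+1))' = (m+1) (-ln(1-z))^m / (1-z)]. *)
Lemma ln_coefSS m n :
  ln_coef m.+1 n.+1 = m.+1%:R * psum (ln_coef m) n / n.+1%:R.
Proof.
pose P : {poly rat} := genpoly (fun j => (j%:R)^-1) n.+1.
rewrite -[ln_coef m.+1 n.+1]/((P ^+ m.+1)`_n.+1).
have dP i : (i <= n)%N -> P^`()`_i = 1.
  move=> lein; rewrite coef_deriv coef_genpoly /= ltnS lein /=.
  by rewrite -[_^-1 *+ _]mulr_natr mulVf // pnatr_eq0.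
apply: (canRL (mulfK _)); first by rewrite pnatr_eq0.
rewrite mulr_natr -coef_deriv deriv_exp coefMn coefMr -[_ *+ m.+1]mulr_natl.
congr (_ * _); apply: eq_bigr => j _.
by rewrite dP ?leq_subr // mul1r ln_coefE // ltnW.
Qed.

Lemma Hmult_ln_coef n m : Hmult n m = psum (ln_coef m) n.
Proof.
rewrite /psum; case: m => [|m].
  by rewrite big_ord_recl ln_coef0n big1 ?addr0 // => N _; rewrite ln_coef0n.
under eq_bigr => N _ do
  rewrite -(ln_coefE m.+1 (leq_ord N)) coef_genpoly_expr big_mkcondr.
rewrite exchange_big /Hmult big_mkcondr /=.
apply: eq_bigr => k /pos_tuple_tsum_ge le1k.
rewrite -big_mkcondr (eq_bigl (fun N : 'I_n.+1 => N == tsum k :> nat)); last first.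
  by move=> N; rewrite eq_sym.
by rewrite (big_ord1_eq _ (fun=> _)) ltnS (leq_ltn_trans (leq0n m) le1k).
Qed.

Lemma stirling1_ln_coef n m :
  stirling1 n m = (-1) ^+ (n + m) * ((n`!)%:R / (m`!)%:R) * ln_coef m n.
Proof.
rewrite /stirling1 /ln_coef coef_genpoly_expr [LHS]mulrC [RHS]mulrAC; congr (_ * _).
rewrite mulr_sumr; apply: eq_bigr => k /andP[/forallP k_gt0 /eqP tsum_n].
rewrite big_split /= prodrXr.
have -> : (-1) ^+ (n + m) = (-1) ^+ (tsum k + m) :> rat by rewrite tsum_n.
have -> : (tsum k + m = \sum_(i < m) (k i).-1 + m.*2)%N.
  rewrite /tsum -addnn addnA; congr (_ + _).
  rewrite -[m in (_ + m)%N]card_ord -sum1_card -big_split /=.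
  by apply: eq_bigr => i _; rewrite addn1 prednK ?k_gt0.
by rewrite exprD -muln2 exprM sqrr_sign mulr1.
Qed.

Lemma bintr_psum_ln_coef m n :
  bintr (psum (ln_coef m)) n = (-1) ^+ m * ln_coef m n.
Proof.
elim: m n => [|m IHm] n.
  case: n => [|n]; first by rewrite bintr0 psum0 expr0 mul1r.
  rewrite bintr_psumS ln_coef0n (eq_bintr (fun k => ln_coef0n k.+1)) expr0 mul1r.
  by rewrite /bintr big1 ?oppr0 // => k _; rewrite mulr0.
case: n => [|n]; first by rewrite bintr0 psum0 ln_coef0 mulr0.
rewrite bintr_psumS (eq_bintr (ln_coefSS m)) bintr_divS ln_coefSS.
have -> : psum (bintr (fun k => m.+1%:R * psum (ln_coef m) k)) n
    = m.+1%:R * ((-1) ^+ m * psum (ln_coef m) n).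
  by rewrite /psum !mulr_sumr; apply: eq_bigr => j _; rewrite bintrZ IHm.
by rewrite exprS; ring.
Qed.

Lemma bintr_ln_coef m n : bintr (ln_coef m) n = (-1) ^+ m * psum (ln_coef m) n.
Proof. exact: bintr_psum_bintr (bintr_psum_ln_coef m) n. Qed.

Theorem corollary2 (n m : nat) :
  \sum_(0 <= k < n.+1) ('C(n, k))%:R * (-1) ^+ k * Hmult k m
    = (-1) ^+ n * ((m`!)%:R / (n`!)%:R) * stirling1 n m
  /\
  \sum_(m <= k < n.+1) ('C(n, k))%:R * (stirling1 k m / (k`!)%:R)
    = ((m`!)%:R)^-1 * Hmult n m.
Proof.
have fact_neq0 k : (k`!)%:R != 0 :> rat by rewrite pnatr_eq0 -lt0n fact_gt0.
split.
  under eq_bigr do rewrite Hmult_ln_coef.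
  rewrite big_mkord -/(bintr _ n) bintr_psum_ln_coef stirling1_ln_coef.
  have sign : (-1) ^+ n * (-1) ^+ (n + m) = (-1) ^+ m :> rat.
    by rewrite exprD mulrA -expr2 sqrr_sign mul1r.
  by rewrite -sign; field; rewrite !fact_neq0.
rewrite Hmult_ln_coef -(signrMK m (psum _ n)) -bintr_ln_coef /bintr !mulr_sumr.
rewrite big_geq_mkord big_mkcond; apply: eq_bigr => k _ /=.
case: leqP => [_ | ltkm]; last by rewrite ln_coef_small ?mulr0.
by rewrite stirling1_ln_coef exprD; field; rewrite !fact_neq0.
Qed.
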